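(* Let $X \in \{0,1\}$ be a binary random variable and let $Y_x$ be a real-valued random variable (a potential outcome). Suppose that for each $x' \in \{0,1\}$ the conditional distribution of $Y_x$ given $X = x'$ has a cdf that is strictly increasing and continuous on its support. Let $\underline{y}_x$ and $\overline{y}_x$ (possibly $-\infty$ and $+\infty$) denote the lower and upper endpoints of the support of $Y_x$, and let $p(y_x) = \Pr(X=1 \mid Y_x = y_x)$. Let $\mathcal{T} \subseteq \mathbb{R}$. Then $Y_x$ is $\mathcal{T}$-independent of $X$ if and only if \[ \mathbb{E}\big( p(Y_x) \mid Y_x \in (t_1,t_2) \big) = \Pr(X=1) \] for all $t_1, t_2 \in \mathcal{T} \cup \{\underline{y}_x, \overline{y}_x\}$ with $t_1 < t_2$.
   Context: $Y_x$ is called $\mathcal{T}$-independent of $X$ if $F_{Y_x\mid X}(\tau \mid 0) = F_{Y_x \mid X}(\tau \mid 1)$ for all $\tau \in \mathcal{T}$, where $F_{Y_x\mid X}(\cdot\mid x')$ is the conditional cdf of $Y_x$ given $X=x'$. The function $p$ is called the latent propensity score. *)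

From HB Require Import structures.
From mathcomp Require Import all_boot all_order all_algebra.
From mathcomp Require Import all_classical all_reals all_analysis.
Set Implicit Arguments. Unset Strict Implicit. Unset Printing Implicit Defensive.
Import Order.TTheory GRing.Theory Num.Theory.
Import numFieldNormedType.Exports.
Local Open Scope classical_set_scope.
Local Open Scope ring_scope.

Section defs.
Context {d : measure_display} {T : measurableType d} {R : realType}.
Variables (P : probability T R) (X : T -> bool) (Y : T -> R).

Definition prX (b : bool) : R := fine (P [set w | X w = b]).

Definition condcdf (b : bool) (tau : R) : R :=
  fine (P ([set w | Y w <= tau] `&` [set w | X w = b])) / prX b.

Definition condsupp (b : bool) : set R :=
  [set y | forall e : R, 0 < e ->
     (0 < P ([set w | (`|Y w - y| < e)%R] `&` [set w | X w = b]))%E].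

Definition supp : set R :=
  [set y | forall e : R, 0 < e -> (0 < P [set w | (`|Y w - y| < e)%R])%E].

Definition ylow : \bar R := ereal_inf (EFin @` supp).
Definition yup : \bar R := ereal_sup (EFin @` supp).

(* p is (a version of) the latent propensity score y |-> Pr(X = 1 | Y = y) *)
Definition is_propensity (p : R -> R) : Prop :=
  measurable_fun setT p /\
  P.-integrable setT (fun w => (p (Y w))%:E) /\
  forall B : set R, measurable B ->
    (\int[P]_(w in Y @^-1` B) (p (Y w))%:E = P (Y @^-1` B `&` [set w | X w = true]))%E.

Definition Yin (t1 t2 : \bar R) : set T := [set w | (t1 < (Y w)%:E < t2)%E].

Definition condexp_p (p : R -> R) (t1 t2 : \bar R) : R :=
  fine (\int[P]_(w in Yin t1 t2) (p (Y w))%:E) / fine (P (Yin t1 t2)).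

Definition T_independent (Tset : set R) : Prop :=
  forall tau, Tset tau -> condcdf false tau = condcdf true tau.
End defs.

From HB Require Import structures.
From mathcomp Require Import all_boot all_order all_algebra.
From mathcomp Require Import all_classical all_reals all_analysis.
From mathcomp Require Import ring lra measurable_realfun.
Import Order.TTheory GRing.Theory Num.Theory.
Import numFieldNormedType.Exports.
Local Open Scope classical_set_scope.
Local Open Scope ring_scope.

(* Let E be the event X = true and D A := P(A /\ E) - P(A) P(E) the independence
   defect of an event A: D is additive and vanishes on null events and on the whole
   space. Equality of the two conditional cdfs at tau says D(Y <= tau) = 0, and since
   the propensity score integrates to P(. /\ E) over events of Y,
   E(p(Y) | t1 < Y < t2) = P(E) says D(t1 < Y < t2) = 0. Continuity of the conditional
   cdfs on their supports makes Y atomless, so D(Y <= tau) = D(Y < tau) and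
   D(t1 < Y < t2) = D(Y < t2) - D(Y < t1); and Y lies almost surely between ylow and
   yup, so D(Y < ylow) = D(Y < yup) = 0. Both implications follow by telescoping. *)

Section real_probability.
Context {d : measure_display} {T : measurableType d} {R : realType}.
Variable P : probability T R.
Implicit Types A B E : set T.

Definition prob A : R := fine (P A).

Lemma probE A : measurable A -> P A = (prob A)%:E.
Proof. by move=> mA; rewrite /prob fineK // fin_num_measure. Qed.

Lemma prob_ge0 A : 0 <= prob A.
Proof. exact: fine_ge0. Qed.

Lemma prob_gt0 A : measurable A -> (0 < P A)%E -> 0 < prob A.
Proof. by move=> mA; rewrite probE // lte_fin. Qed.

Lemma probT : prob setT = 1.
Proof. by rewrite /prob probability_setT. Qed.

Lemma prob_null A : P A = 0%E -> prob A = 0.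
Proof. by rewrite /prob => ->. Qed.

Lemma prob_eq0 A : measurable A -> prob A = 0 -> P A = 0%E.
Proof. by move=> mA A0; rewrite probE // A0. Qed.

Lemma le_prob A B : measurable A -> measurable B -> A `<=` B -> prob A <= prob B.
Proof. by move=> mA mB AB; rewrite -lee_fin -!probE // le_measure ?inE. Qed.

Lemma probU A B : measurable A -> measurable B -> A `&` B = set0 ->
  prob (A `|` B) = prob A + prob B.
Proof.
by move=> mA mB AB; apply: EFin_inj; rewrite EFinD -!probE ?measureU //; exact: measurableU.
Qed.

Lemma probU2 A B : measurable A -> measurable B -> prob (A `|` B) <= prob A + prob B.
Proof.
by move=> mA mB; rewrite -lee_fin EFinD -!probE ?measureU2 //; exact: measurableU.
Qed.

Lemma probIC A E : measurable A -> measurable E ->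
  prob A = prob (A `&` E) + prob (A `&` ~` E).
Proof.
move=> mA mE; rewrite -probU.
- by rewrite -setIUr setUCr setIT.
- exact: measurableI.
- by apply: measurableI => //; exact: measurableC.
- by rewrite setIACA setICr !setI0.
Qed.

Section independence_defect.
Variables (E : set T) (mE : measurable E).

Definition indep_defect A : R := prob (A `&` E) - prob A * prob E.

Lemma indep_defectU A B : measurable A -> measurable B -> A `&` B = set0 ->
  indep_defect (A `|` B) = indep_defect A + indep_defect B.
Proof.
move=> mA mB AB; rewrite /indep_defect setIUl (probU _ _ mA mB AB) probU.
- by ring.
- exact: measurableI.
- exact: measurableI.
- by rewrite setIACA AB set0I.
Qed.

Lemma indep_defect_null A : measurable A -> P A = 0%E -> indep_defect A = 0.
Proof.
move=> mA A0; have AE0 : P (A `&` E) = 0%E.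
  exact: (subset_measure0 (measurableI _ _ mA mE) mA (@subIsetl _ A E) A0).
by rewrite /indep_defect (prob_null _ A0) (prob_null _ AE0) mul0r subrr.
Qed.

Lemma indep_defectT : indep_defect setT = 0.
Proof. by rewrite /indep_defect setTI probT mul1r subrr. Qed.

Lemma indep_defectC A : measurable A -> indep_defect (~` A) = - indep_defect A.
Proof.
move=> mA; apply/eqP; rewrite -subr_eq0 opprK addrC -indep_defectU ?setUCr ?setICr //.
- by rewrite indep_defectT.
- exact: measurableC.
Qed.

Lemma cond_prob_eq_iff A : 0 < prob A ->
  prob (A `&` E) / prob A = prob E <-> indep_defect A = 0.
Proof.
move=> A_gt0; rewrite /indep_defect; split => [<-|/eqP].
  by rewrite mulrC divfK ?gt_eqF ?subrr.
by rewrite subr_eq0 => /eqP ->; rewrite mulrAC divff ?mul1r ?gt_eqF.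
Qed.

Lemma cond_probC_eq_iff A : measurable A -> 0 < prob E -> 0 < prob (~` E) ->
  prob (A `&` ~` E) / prob (~` E) = prob (A `&` E) / prob E <-> indep_defect A = 0.
Proof.
move=> mA E_gt0 CE_gt0.
have probCE : prob (~` E) = 1 - prob E.
  by rewrite -probT (probIC _ _ measurableT mE) !setTI addrC addKr.
have probIC_A : prob (A `&` ~` E) = prob A - prob (A `&` E).
  by rewrite (probIC _ _ mA mE) addrC addKr.
have cross : prob (A `&` ~` E) * prob E - prob (A `&` E) * prob (~` E) = - indep_defect A.
  by rewrite probCE probIC_A /indep_defect; ring.
rewrite (rwP eqP) eqr_div ?lt0r_neq0 // -subr_eq0 cross oppr_eq0.
by split => /eqP.
Qed.

End independence_defect.

End real_probability.

Section real_random_variable.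
Context {d : measure_display} {T : measurableType d} {R : realType}.
Variable P : probability T R.
Context {Z : T -> R}.
Hypothesis mZ : measurable_fun setT Z.

Lemma measurable_preimage (B : set R) : measurable B -> measurable [set w | B (Z w)].
Proof. by move=> mB; rewrite -[X in measurable X]setTI; exact: mZ. Qed.

Lemma measurable_EFin_preimage (B : set (\bar R)) :
  measurable B -> measurable [set w | B (Z w)%:E].
Proof.
move=> mB; have mEZ : measurable_fun setT (EFin \o Z) by exact/measurable_EFinP.
by rewrite -[X in measurable X]setTI; exact: mEZ.
Qed.

Lemma measurable_le c : measurable [set w | Z w <= c].
Proof. by apply: (measurable_preimage [set x | x <= c]); rewrite -set_itvNyc. Qed.

Lemma measurable_dist_lt y e : measurable [set w | `|Z w - y| < e].
Proof.
apply: (measurable_preimage [set x | `|x - y| < e]).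
rewrite (_ : [set x | _] = ball y e); first exact: measurable_ball.
by apply/seteqP; split=> x; rewrite -ball_normE /= distrC.
Qed.

Lemma measurable_lt_EFin (t : \bar R) : measurable [set w | ((Z w)%:E < t)%E].
Proof.
apply: (measurable_EFin_preimage [set x | (x < t)%E]).
by rewrite -set_itvNyo; exact: emeasurable_itv.
Qed.

Lemma measurable_gt_EFin (t : \bar R) : measurable [set w | (t < (Z w)%:E)%E].
Proof.
apply: (measurable_EFin_preimage [set x | (t < x)%E]).
by rewrite -set_itvoy; exact: emeasurable_itv.
Qed.

Lemma measurable_eq_EFin (t : \bar R) : measurable [set w | (Z w)%:E = t].
Proof. exact: (measurable_EFin_preimage [set t]). Qed.

Lemma measurable_Yin (t1 t2 : \bar R) : measurable (Yin Z t1 t2).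
Proof.
apply: (measurable_EFin_preimage [set x | (t1 < x < t2)%E]).
by rewrite -set_itvoo; exact: emeasurable_itv.
Qed.

Lemma le_prob_le s t : s <= t -> prob P [set w | Z w <= s] <= prob P [set w | Z w <= t].
Proof.
move=> st; apply: le_prob; try exact: measurable_le.
by move=> w /= /le_trans; apply.
Qed.

Lemma prob_le_small eps : 0 < eps -> exists M, prob P [set w | Z w <= M] < eps.
Proof.
move=> eps_gt0.
pose Zrv : {RV P >-> R} :=
  MeasurableFun.Pack (MeasurableFun.Class (isMeasurableFun.Build _ _ _ _ _ mZ)).
have /fine_cvgP [_ cdf0] := cvg_cdfNy0 Zrv.
have [M [_ HM]] := cvgr_lt _ cdf0 _ eps_gt0.
exists (M - 1); move: (HM (M - 1)); rewrite /= /cdf /distribution /pushforward set_itvNyc.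
by apply; rewrite ltrBlDr ltrDl.
Qed.

(* The least level at which the cdf reaches half of its value at c is a support point. *)
Lemma supp_le c : (0 < P [set w | (Z w <= c)%R])%E -> exists2 y, supp P Z y & y <= c.
Proof.
move=> /(prob_gt0 _ _ (measurable_le c)); set m := prob P _ => m_gt0.
have m2_gt0 : 0 < m / 2 by rewrite divr_gt0.
have [M leM] := prob_le_small _ m2_gt0.
pose S := [set t | m / 2 <= prob P [set w | Z w <= t]].
have S_lb : lbound S M.
  move=> t St; rewrite leNgt; apply/negP => /ltW /le_prob_le.
  by move=> /(le_trans St) /(lt_le_trans leM); rewrite ltxx.
have Sc : S c by rewrite /S /= -/m; lra.
have S_inf : has_inf S by split; [exists c | exists M].
exists (inf S); last exact: ge_inf (proj2 S_inf) _ Sc.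
move=> e e_gt0; have e2_gt0 : 0 < e / 2 by rewrite divr_gt0.
have [t St t_lt] := inf_adherent e2_gt0 S_inf.
have below_inf : prob P [set w | Z w <= inf S - e / 2] < prob P [set w | Z w <= t].
  rewrite (lt_le_trans _ St) // ltNge; apply/negP => /(ge_inf (proj2 S_inf)).
  lra.
have cover : [set w | Z w <= t] `<=`
    [set w | Z w <= inf S - e / 2] `|` [set w | `|Z w - inf S| < e].
  move=> w /= Zw; have [|lt_Zw] := leP (Z w) (inf S - e / 2); [by left|right].
  rewrite ltr_distl; apply/andP; split; lra.
rewrite probE; last exact: measurable_dist_lt.
rewrite lte_fin lt_neqAle prob_ge0 andbT; apply/eqP => ball0.
have mlow := measurable_le (inf S - e / 2); have mball := measurable_dist_lt (inf S) e.
have := le_prob P _ _ (measurable_le t) (measurableU _ _ mlow mball) cover.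
move=> /le_trans /(_ (probU2 P _ _ mlow mball)).
by rewrite -ball0 addr0 => /(lt_le_trans below_inf); rewrite ltxx.
Qed.

Lemma null_lt_of_null_le (t : \bar R) :
  (forall y : R, (y%:E < t)%E -> P [set w | Z w <= y] = 0%E) ->
  P [set w | ((Z w)%:E < t)%E] = 0%E.
Proof.
move=> le0; apply/negligibleP; first exact: measurable_lt_EFin.
case: t le0 => [r | |] le0.
- apply: (@negligibleS _ _ _ _ (\bigcup_n [set w | Z w <= r - n.+1%:R^-1])).
    move=> w /=; rewrite lte_fin => /ltr_add_invr [k lt_k].
    by exists k => //=; rewrite lerBrDr ltW.
  apply: negligible_bigcup => k; apply/negligibleP; first exact: measurable_le.
  by apply: le0; rewrite lte_fin ltrBlDr ltrDl invr_gt0.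
- apply: (@negligibleS _ _ _ _ (\bigcup_n [set w | Z w <= n%:R])).
    by move=> w _; exists (Num.truncn (Z w)).+1 => //=; exact/ltW/truncnS_gt.
  apply: negligible_bigcup => k; apply/negligibleP; first exact: measurable_le.
  by apply: le0; rewrite ltry.
- rewrite (_ : [set w | _] = set0); first exact: negligible_set0.
  by apply/seteqP; split => w //=; rewrite ltNge leNye.
Qed.

Lemma null_lt_ylow : P [set w | ((Z w)%:E < ylow P Z)%E] = 0%E.
Proof.
apply: null_lt_of_null_le => y lt_y; apply/eqP.
rewrite eq_le measure_ge0 andbT leNgt; apply/negP => /supp_le [z supp_z le_zy].
have ylow_le_z : (ylow P Z <= z%:E)%E by apply: ereal_inf_lbound; exists z.
have : (ylow P Z < ylow P Z)%E.
  by rewrite (le_lt_trans ylow_le_z) // (le_lt_trans _ lt_y) // lee_fin.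
by rewrite ltxx.
Qed.

Lemma prob_atom_eq0 (E : set T) (y : R) : measurable E ->
  {for y, continuous (fun t => prob P ([set w | Z w <= t] `&` E))} ->
  prob P ([set w | Z w = y] `&` E) = 0.
Proof.
move=> mE F_cont; set m := prob P _.
pose F t := prob P ([set w | Z w <= t] `&` E).
have mle t : measurable ([set w | Z w <= t] `&` E).
  by apply: measurableI => //; exact: measurable_le.
have matom : measurable ([set w | Z w = y] `&` E).
  by apply: measurableI => //; exact: (measurable_preimage _ (measurable_set1 y)).
apply/eqP; rewrite eq_le prob_ge0 andbT leNgt; apply/negP => m_gt0.
have F_cvg : F t @[t --> y] --> F y := F_cont.
have := cvgr_dist_lt _ _ F_cvg _ m_gt0.
move=> /(_ (nbhs_filter y)) /nbhs_ballP [e /= e_gt0 near_y].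
have jump : F (y - e / 2) + m <= F y.
  rewrite -probU //.
    apply: le_prob => //; first exact: measurableU.
    move=> w [[/= Zw Ew] | [/= -> Ew]] //; split => //=.
    by rewrite (le_trans Zw) // gerBl divr_ge0 // ltW.
  apply/seteqP; split => // w [[/= Zw _] [/= Zy _]]; rewrite Zy in Zw; exfalso; lra.
have : `|F y - F (y - e / 2)| < m.
  by apply: near_y; rewrite -ball_normE /= opprB addrC subrK ger0_norm; lra.
by rewrite ger0_norm => *; lra.
Qed.

End real_random_variable.

Section support_upper_endpoint.
Context {d : measure_display} {T : measurableType d} {R : realType}.
Variable P : probability T R.
Context {Z : T -> R}.
Hypothesis mZ : measurable_fun setT Z.

Lemma suppN y : supp P (fun w => - Z w) y <-> supp P Z (- y).
Proof.
have dist_eq e : [set w | `|- Z w - y| < e] = [set w | `|Z w - - y| < e].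
  by apply/seteqP; split => w /=; rewrite -normrN opprD !opprK.
by split => S e /S; rewrite dist_eq.
Qed.

Lemma ylowN : ylow P (fun w => - Z w) = (- yup P Z)%E.
Proof.
rewrite /ylow /yup -ereal_infN; congr ereal_inf.
apply/seteqP; split => t /=.
  move=> [y /suppN Sy <-]; exists (- y)%:E; first by exists (- y).
  by rewrite EFinN oppeK.
move=> [_ [x Sx <-] <-]; exists (- x); last by rewrite EFinN.
by apply/suppN; rewrite opprK.
Qed.

Lemma null_gt_yup : P [set w | (yup P Z < (Z w)%:E)%E] = 0%E.
Proof.
rewrite (_ : [set w | _] = [set w | ((- Z w)%:E < ylow P (fun w => (- Z w)%R))%E]).
  exact: null_lt_ylow (measurable_funN mZ).
by apply/seteqP; split => w /=; rewrite ylowN EFinN lteN2.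
Qed.

End support_upper_endpoint.

Section T_independence.
Context {d : measure_display} {T : measurableType d} {R : realType}.
Variables (P : probability T R) (X : T -> bool) (Y : T -> R).
Hypotheses (mX : measurable_fun setT X) (mY : measurable_fun setT Y).
Hypotheses (hX1 : (0 < P [set w | X w = true])%E) (hX0 : (0 < P [set w | X w = false])%E).
Hypothesis hcont : forall b y, condsupp P X Y b y -> {for y, continuous (condcdf P X Y b)}.

Let mXb b : measurable [set w | X w = b].
Proof. by rewrite -[A in measurable A]setTI; apply: (mX measurableT [set b]). Qed.

Let setC_Xtrue : ~` [set w | X w = true] = [set w | X w = false].
Proof. by apply/seteqP; split => w /=; case: (X w). Qed.

Let prX_gt0 b : 0 < prX P X b.
Proof. by case: b; exact: prob_gt0. Qed.

Lemma prob_atom_Y_X b y : prob P ([set w | Y w = y] `&` [set w | X w = b]) = 0.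
Proof.
have [supp_y | /existsNP [e /not_implyP [e_gt0 /negP]]] := pselect (condsupp P X Y b y).
  apply: prob_atom_eq0 => //.
  have -> : (fun t => prob P ([set w | Y w <= t] `&` [set w | X w = b])) =
      (fun t => condcdf P X Y b t * prX P X b).
    by apply: funext => t; rewrite /condcdf divfK ?lt0r_neq0.
  by have := hcont _ _ supp_y; exact: cvgMr_tmp.
rewrite lt0e measure_ge0 andbT negbK => /eqP ball0.
apply/prob_null/(subset_measure0 _ _ _ ball0).
- by apply: measurableI => //; exact: (measurable_preimage mY _ (measurable_set1 y)).
- by apply: measurableI => //; exact: measurable_dist_lt.
- by move=> w [/= Yw Xw]; split => //=; rewrite Yw subrr normr0.
Qed.

Lemma null_atom_Y (t : \bar R) : P [set w | (Y w)%:E = t] = 0%E.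
Proof.
case: t => [y | |]; last 2 first.
- by rewrite (_ : [set w | _] = set0) ?measure0 //; apply/seteqP; split => w.
- by rewrite (_ : [set w | _] = set0) ?measure0 //; apply/seteqP; split => w.
rewrite (_ : [set w | _] = [set w | Y w = y]); last first.
  by apply/seteqP; split => w /= => [[]|->].
have matom : measurable [set w | Y w = y].
  exact: (measurable_preimage mY _ (measurable_set1 y)).
apply: prob_eq0 => //; rewrite (probIC _ _ _ matom (mXb true)) setC_Xtrue.
by rewrite !prob_atom_Y_X addr0.
Qed.

Local Notation defect := (indep_defect P [set w | X w = true]).
Local Notation Ylt t := [set w | ((Y w)%:E < t)%E].

Let mYle tau : measurable [set w | Y w <= tau] := measurable_le mY tau.
Let mYlt t : measurable (Ylt t) := measurable_lt_EFin mY t.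
Let mYgt t : measurable [set w | (t < (Y w)%:E)%E] := measurable_gt_EFin mY t.
Let mYeq t : measurable [set w | (Y w)%:E = t] := measurable_eq_EFin mY t.
Let mYin t1 t2 : measurable (Yin Y t1 t2) := measurable_Yin mY t1 t2.

Lemma condcdf_eq_iff tau : condcdf P X Y false tau = condcdf P X Y true tau <->
  defect [set w | Y w <= tau] = 0.
Proof.
rewrite /condcdf /prX -setC_Xtrue.
by apply: cond_probC_eq_iff => //; rewrite ?setC_Xtrue; exact: prX_gt0.
Qed.

Let defect_atom t : defect [set w | (Y w)%:E = t] = 0.
Proof. exact: indep_defect_null (null_atom_Y t). Qed.

Lemma defect_le_lt tau : defect [set w | Y w <= tau] = defect (Ylt tau%:E).
Proof.
rewrite (_ : [set w | Y w <= tau] = Ylt tau%:E `|` [set w | (Y w)%:E = tau%:E]).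
  rewrite indep_defectU //; first by rewrite defect_atom addr0.
  by apply/seteqP; split => // w [/= /lt_eqF/negbT/eqP].

apply/seteqP; split => w /=; first by rewrite le_eqVlt => /predU1P [->|]; [right|left].
by case=> [/ltW|[->]].
Qed.

Lemma defect_Yin t1 t2 : (t1 < t2)%E ->
  defect (Yin Y t1 t2) = defect (Ylt t2) - defect (Ylt t1).
Proof.
move=> t12.
have -> : Ylt t2 = (Ylt t1 `|` [set w | (Y w)%:E = t1]) `|` Yin Y t1 t2.
  apply/seteqP; split => w /=.
    case: (ltgtP (Y w)%:E t1) => [lt1 | gt1 | ->] lt2; [by left; left | | by left; right].
    by right; rewrite /Yin /= gt1 lt2.
  by case=> [[/lt_trans/(_ t12) | ->] | /andP []].
have m_le1 : measurable (Ylt t1 `|` [set w | (Y w)%:E = t1]) by exact: measurableU.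
rewrite indep_defectU //; last first.
  apply/seteqP; split => // w [[/= lt1 | /= eq1]]; rewrite /Yin /= => /andP [gt1 _].
    by move: gt1; rewrite ltNge (ltW lt1).
  by move: gt1; rewrite eq1 ltxx.
rewrite indep_defectU //; last by apply/seteqP; split => // w [/= /lt_eqF/negbT/eqP].
by rewrite defect_atom addr0 addrC addKr.
Qed.

Lemma defect_lt_ylow t : (t <= ylow P Y)%E -> defect (Ylt t) = 0.
Proof.
move=> le_t; apply: indep_defect_null => //.
by apply: (subset_measure0 _ _ _ (null_lt_ylow P mY)) => // w /= /lt_le_trans; apply.
Qed.

Lemma defect_lt_yup : defect (Ylt (yup P Y)) = 0.
Proof.
apply/eqP; rewrite -oppr_eq0 -indep_defectC //; apply/eqP.
apply: indep_defect_null => //; first exact: measurableC.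
rewrite (_ : ~` _ = [set w | (yup P Y < (Y w)%:E)%E] `|` [set w | (Y w)%:E = yup P Y]).
  by rewrite measureU0 //; [exact: null_gt_yup | exact: null_atom_Y].
apply/seteqP; split => w /=.
  by move=> /negP; rewrite -leNgt le_eqVlt => /predU1P [<-|]; [right|left].
by case=> [/ltW le_y | ->]; apply/negP; rewrite -leNgt ?lexx.
Qed.

Variable p : R -> R.
Hypothesis hp : is_propensity P X Y p.

Lemma condexp_p_eq_iff t1 t2 : (0 < P (Yin Y t1 t2))%E ->
  condexp_p P Y p t1 t2 = prX P X true <-> defect (Yin Y t1 t2) = 0.
Proof.
move=> Yin_gt0; have [_ [_ int_p]] := hp; rewrite /condexp_p.
have -> : (\int[P]_(w in Yin Y t1 t2) (p (Y w))%:E)%E =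
    P (Yin Y t1 t2 `&` [set w | X w = true]).
  exact: int_p (measurable_Yin (@measurable_id _ R setT) t1 t2).
exact: cond_prob_eq_iff (prob_gt0 _ _ _ Yin_gt0).
Qed.

Lemma T_independent_iff_condexp (Tset : set R) :
  T_independent P X Y Tset <->
  (forall t1 t2 : \bar R,
     (EFin @` Tset `|` [set ylow P Y; yup P Y]) t1 ->
     (EFin @` Tset `|` [set ylow P Y; yup P Y]) t2 ->
     (t1 < t2)%E ->
     (0 < P (Yin Y t1 t2))%E ->
     condexp_p P Y p t1 t2 = prX P X true).
Proof.
split => [indep t1 t2 end1 end2 t12 Yin_gt0 | condexp tau T_tau].
  have defect_end t : (EFin @` Tset `|` [set ylow P Y; yup P Y]) t -> defect (Ylt t) = 0.
    case=> [[tau T_tau <-] | [-> | ->]]; last exact: defect_lt_yup.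
      by rewrite -defect_le_lt; apply/condcdf_eq_iff; exact: indep.
    exact: defect_lt_ylow.
  by apply/condexp_p_eq_iff => //; rewrite defect_Yin // !defect_end // subrr.
apply/condcdf_eq_iff; rewrite defect_le_lt.
have [le_tau | ylow_lt] := leP tau%:E (ylow P Y); first exact: defect_lt_ylow.
rewrite -[LHS]subr0 -[X in _ - X](defect_lt_ylow (ylow P Y)) // -defect_Yin //.
have [Yin_gt0 | Yin_le0] := ltP 0%E (P (Yin Y (ylow P Y) tau%:E)).
  by apply/(condexp_p_eq_iff _ _ Yin_gt0)/condexp => //; [right; left | left; exists tau].
by apply: indep_defect_null => //; apply/eqP; rewrite -measure_le0.
Qed.

End T_independence.

Theorem theorem1 (d : measure_display) (T : measurableType d) (R : realType)
  (P : probability T R) (X : T -> bool) (Y : T -> R)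
  (mX : measurable_fun setT X) (mY : measurable_fun setT Y)
  (hX1 : (0 < P [set w | X w = true])%E) (hX0 : (0 < P [set w | X w = false])%E)
  (hinc : forall b y1 y2, condsupp P X Y b y1 -> condsupp P X Y b y2 ->
     y1 < y2 -> condcdf P X Y b y1 < condcdf P X Y b y2)
  (hcont : forall b y, condsupp P X Y b y -> {for y, continuous (condcdf P X Y b)})
  (p : R -> R) (hp : is_propensity P X Y p)
  (Tset : set R) :
  T_independent P X Y Tset <->
  (forall t1 t2 : \bar R,
     (EFin @` Tset `|` [set ylow P Y; yup P Y]) t1 ->
     (EFin @` Tset `|` [set ylow P Y; yup P Y]) t2 ->
     (t1 < t2)%E ->
     (0 < P (Yin Y t1 t2))%E ->
     condexp_p P Y p t1 t2 = prX P X true).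
Proof. exact: T_independent_iff_condexp mX mY hX1 hX0 hcont p hp Tset. Qed.
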